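(* For even $m\ge 10$, let $T_m:=K_1\vee\bigl(K_4\cup (m-10)K_1\bigr)$, i.e. the graph consisting of a vertex $u^*$ adjacent to all vertices of a disjoint union of a $K_4$ and $m-10$ isolated vertices (so $T_m$ has $m$ edges). Then $T_m$ is $H(4,3)$-free, $\rho(T_m)>\rho'(m)$ for $m\in\{10,12,14,16\}$, and $\rho(T_m)<\rho'(m)$ for every even $m\ge 18$.
   Context: All graphs are finite, simple and undirected; $\rho(G)$ denotes the adjacency spectral radius of $G$. $H(4,3)$ is the graph obtained from a $4$-cycle and a triangle by identifying one vertex of the $4$-cycle with one vertex of the triangle; $H(4,3)$-free means containing no subgraph isomorphic to $H(4,3)$. $G_1\vee G_2$ denotes the join (disjoint union plus all edges between the two parts), and $\cup$ denotes disjoint union. For even $m$, $\rho'(m)$ is the largest real root of $p_m(x)=x^4-mx^2-(m-2)x+\frac{m}{2}-1$. *)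

From HB Require Import structures.
From mathcomp Require Import all_boot all_order all_algebra.
From mathcomp Require Import classical_sets reals.
Set Implicit Arguments. Unset Strict Implicit. Unset Printing Implicit Defensive.
Import Order.TTheory GRing.Theory Num.Theory.
Local Open Scope ring_scope.
Local Open Scope classical_set_scope.

Definition simple_graph (V : finType) (e : rel V) : Prop :=
  (forall x y, e x y = e y x) /\ (forall x, e x x = false).

(* H(4,3): 4-cycle 0-1-2-3-0 and triangle 0-4-5-0, sharing vertex 0. *)
Definition H43_edges : seq (nat * nat) :=
  [:: (0,1); (1,2); (2,3); (3,0); (0,4); (4,5); (5,0)]%N.

Definition H43_adj : rel 'I_6 :=
  fun i j => ((nat_of_ord i, nat_of_ord j) \in H43_edges)
          || ((nat_of_ord j, nat_of_ord i) \in H43_edges).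

Definition contains_subgraph (VH V : finType) (eH : rel VH) (e : rel V) : Prop :=
  exists f : VH -> V, injective f /\ forall x y, eH x y -> e (f x) (f y).

Definition H43_free (V : finType) (e : rel V) : Prop :=
  ~ contains_subgraph H43_adj e.

(* Adjacency matrix and adjacency spectral radius (max modulus of an
   eigenvalue; adjacency matrices are real symmetric so all eigenvalues
   are real). *)
Definition adj_matrix (R : nzRingType) (n : nat) (e : rel 'I_n) : 'M[R]_n :=
  \matrix_(i, j) (e i j)%:R.

Definition spectral_radius (R : realType) (n : nat) (e : rel 'I_n) : R :=
  sup [set `|a| | a in [set a : R | eigenvalue (adj_matrix R e) a]].

(* T_m = K_1 v (K_4 u (m-10) K_1) on vertex set 'I_(m-5): vertex 0 is u*,
   vertices 1..4 form the K_4, vertices 5..m-6 are the isolated ones. *)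
Definition T_adj (m : nat) : rel 'I_(m - 5) :=
  fun i j => (i != j) &&
    [|| nat_of_ord i == 0%N, nat_of_ord j == 0%N
      | (nat_of_ord i <= 4)%N && (nat_of_ord j <= 4)%N].

Definition p_poly (R : realType) (m : nat) : {poly R} :=
  'X^4 - (m%:R : R) *: 'X^2 - ((m%:R : R) - 2) *: 'X + ((m%:R : R) / 2 - 1)%:P.

Definition rho' (R : realType) (m : nat) : R :=
  sup [set x : R | root (p_poly R m) x].
Arguments T_adj m : clear implicits.

(* T_m is H(4,3)-free because every vertex of H(4,3) has two neighbours, whereas
   only the five vertices of the K_5 formed by u* and the K_4 have more than one
   neighbour in T_m.

   The partition of T_m into u*, the K_4 and the k = m - 10 pendant vertices is
   equitable: an eigenvector for an eigenvalue a other than 0 and -1 is constant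
   on each class, so a is a root of the cubic x^3 - 3x^2 - (4 + k)x + 3k of the
   quotient matrix, and conversely every root other than 0 and 3 of this cubic
   is an eigenvalue.  For m <= 16 an explicit c with cubic(c) < 0 and with p_m
   positive and increasing on [c, oo) gives rho'(m) <= c < rho(T_m).  For
   m >= 18 put s^2 = k + 4 >= 12, so the cubic is (x - 3)(x^2 - s^2) - 12: its
   roots have modulus below c = s + 18/(5s), while p_m(c) < 0, which gives
   rho(T_m) <= c < rho'(m). *)

From HB Require Import structures.
From mathcomp Require Import all_boot all_order all_algebra.
From mathcomp Require Import classical_sets reals.
From mathcomp Require Import zify ring lra.
Set Implicit Arguments. Unset Strict Implicit. Unset Printing Implicit Defensive.
Import Order.TTheory GRing.Theory Num.Theory.

Lemma T_adj_simple m : simple_graph (T_adj m).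
Proof.
split => [x y|x]; last by rewrite /T_adj eqxx.
rewrite /T_adj eq_sym; congr andb.
by case: (nat_of_ord x == 0%N); case: (nat_of_ord y == 0%N); rewrite //= andbC.
Qed.

Lemma H43_two_neighbours (x : 'I_6) :
  exists y z : 'I_6, [&& H43_adj x y, H43_adj x z & y != z].
Proof.
case: x => [[|[|[|[|[|[|x]]]]]] hx] //.
- by exists (@Ordinal 6 1 isT), (@Ordinal 6 3 isT).
- by exists (@Ordinal 6 0 isT), (@Ordinal 6 2 isT).
- by exists (@Ordinal 6 1 isT), (@Ordinal 6 3 isT).
- by exists (@Ordinal 6 0 isT), (@Ordinal 6 2 isT).
- by exists (@Ordinal 6 0 isT), (@Ordinal 6 5 isT).
- by exists (@Ordinal 6 0 isT), (@Ordinal 6 4 isT).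
Qed.

Lemma T_adj_pendant m (i j : 'I_(m - 5)) :
  T_adj m i j -> (4 < i)%N -> nat_of_ord j = 0%N.
Proof. by rewrite /T_adj => /andP[_] /or3P[/eqP|/eqP //|/andP[]]; lia. Qed.

Lemma T_adj_H43_free m : H43_free (T_adj m).
Proof.
move=> [f [finj fe]].
have f_le4 x : (nat_of_ord (f x) <= 4)%N.
  have [y [z /and3P[hy hz yz]]] := H43_two_neighbours x.
  rewrite leqNgt; apply/negP => lt.
  have fyz : f y = f z.
    by apply: val_inj; rewrite /= (T_adj_pendant (fe _ _ hy)) ?(T_adj_pendant (fe _ _ hz)).
  by move/finj/eqP: fyz; rewrite (negbTE yz).
pose g (x : 'I_6) : 'I_5 := inord (f x).
have g_inj : injective g.
  move=> x y /(congr1 val); rewrite /g /= !inordK ?ltnS ?f_le4 // => e.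
  by apply: finj; apply: val_inj.
by have := leq_card _ g_inj; rewrite !card_ord.
Qed.

Lemma card_ord_natpred n (P : pred nat) :
  #|[pred i : 'I_n | P (nat_of_ord i)]| = count P (iota 0 n).
Proof.
rewrite cardE /enum_mem size_filter -val_enum_ord count_map.
by rewrite enumT; apply: eq_count => i.
Qed.

Lemma card_T_classes m : (10 <= m)%N ->
  [/\ #|[pred i : 'I_(m - 5) | (nat_of_ord i <= 4) && (nat_of_ord i == 0)]| = 1%N,
      #|[pred i : 'I_(m - 5) | (nat_of_ord i <= 4) && (nat_of_ord i != 0)]| = 4%N
    & #|[pred i : 'I_(m - 5) | ~~ (nat_of_ord i <= 4)]| = (m - 10)%N].
Proof.
move=> hm; have -> : (m - 5 = 5 + (m - 10))%N by lia.
rewrite (card_ord_natpred _ (fun i => (i <= 4) && (i == 0))%N).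
rewrite (card_ord_natpred _ (fun i => (i <= 4) && (i != 0))%N).
rewrite (card_ord_natpred _ (fun i => ~~ (i <= 4))%N) iotaD !count_cat /=.
have count_pendant0 (P : pred nat) :
    (forall i, 5 <= i -> ~~ P i)%N -> count P (iota 5 (m - 10)) = 0%N.
  move=> hP; apply/eqP; rewrite -leqn0 leqNgt -has_count; apply/hasPn => i.
  by rewrite mem_iota => /andP[h _]; apply: hP.
split.
- by rewrite count_pendant0 // => i hi; apply/negP => /andP[]; lia.
- by rewrite count_pendant0 // => i hi; apply/negP => /andP[]; lia.
rewrite /= add0n addn0 (@eq_in_count _ (fun i => ~~ (i <= 4))%N predT) ?count_predT ?size_iota //.
by move=> i; rewrite mem_iota /=; lia.
Qed.

Local Open Scope ring_scope.

Section SpectralRadiusBounds.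
Variables (R : realType) (n : nat) (e : rel 'I_n).

Lemma spectral_radius_le (c : R) :
  (exists a, eigenvalue (adj_matrix R e) a) ->
  (forall a, eigenvalue (adj_matrix R e) a -> `|a| <= c) ->
  spectral_radius R e <= c.
Proof.
move=> [a ha] hc; apply: ge_sup; first by exists `|a|, a.
by move=> _ [b hb <-]; apply: hc.
Qed.

Lemma eigenvalue_le_spectral_radius (a c : R) :
  eigenvalue (adj_matrix R e) a ->
  (forall b, eigenvalue (adj_matrix R e) b -> `|b| <= c) ->
  `|a| <= spectral_radius R e.
Proof.
move=> ha hc; apply: ub_le_sup; last by exists a.
by exists c => _ [b hb <-]; apply: hc.
Qed.

End SpectralRadiusBounds.

Section LargestRoot.
Variables (R : realType) (p : {poly R}).

Lemma sup_roots_le (c : R) :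
  (exists x, root p x) -> (forall x, c < x -> ~~ root p x) ->
  sup [set x | root p x] <= c.
Proof.
move=> [x hx] hc; apply: ge_sup; first by exists x.
by move=> y /= hy; rewrite leNgt; apply: contraL hy; apply: hc.
Qed.

Lemma root_le_sup_roots (x c : R) :
  root p x -> (forall y, c < y -> ~~ root p y) -> x <= sup [set y | root p y].
Proof.
move=> hx hc; apply: ub_le_sup => //.
by exists c => y /= hy; rewrite leNgt; apply: contraL hy; apply: hc.
Qed.

End LargestRoot.

Lemma sum_T_classes (R : comNzRingType) m (g : 'I_(m - 5) -> R) x y z :
  (10 <= m)%N ->
  (forall i : 'I_(m - 5), nat_of_ord i = 0%N -> g i = x) ->
  (forall i : 'I_(m - 5), nat_of_ord i != 0%N -> (i <= 4)%N -> g i = y) ->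
  (forall i : 'I_(m - 5), (4 < i)%N -> g i = z) ->
  \sum_(i | (nat_of_ord i <= 4)%N) g i = x + 4%:R * y /\
  \sum_i g i = x + 4%:R * y + (m - 10)%:R * z.
Proof.
move=> hm hx hy hz; case: (card_T_classes hm) => c1 c2 c3.
have sum_K5 : \sum_(i | (nat_of_ord i <= 4)%N) g i = x + 4%:R * y.
  rewrite (bigID (fun i : 'I_ _ => nat_of_ord i == 0%N)) /=.
  rewrite (eq_bigr (fun _ => x)); last by move=> i /andP[_ /eqP]; apply: hx.
  rewrite [X in _ + X](eq_bigr (fun _ => y)); last by move=> i /andP[h1 h2]; apply: hy.
  by rewrite !sumr_const c1 c2 mulr_natl.
split => //; rewrite (bigID (fun i : 'I_ _ => nat_of_ord i <= 4)%N) /= sum_K5.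
rewrite (eq_bigr (fun _ => z)); last by move=> i; rewrite -ltnNge; apply: hz.
by rewrite sumr_const c3 !mulr_natl.
Qed.

Lemma sumr_mul_indicator (R : comNzRingType) n (v : 'I_n -> R) (P : pred 'I_n) :
  \sum_i v i * (P i)%:R = \sum_(i | P i) v i.
Proof.
by rewrite [RHS]big_mkcond; apply: eq_bigr => i _; case: (P i); rewrite ?mulr1 ?mulr0.
Qed.

Lemma mulmx_T_adj (R : comNzRingType) m (v : 'rV[R]_(m - 5)) (j : 'I_(m - 5)) :
  (v *m adj_matrix R (T_adj m)) 0 j =
  if nat_of_ord j == 0%N then \sum_i v 0 i - v 0 j
  else if (nat_of_ord j <= 4)%N then \sum_(i | (nat_of_ord i <= 4)%N) v 0 i - v 0 j
  else \sum_(i | nat_of_ord i == 0%N) v 0 i.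
Proof.
rewrite mxE; under eq_bigr do rewrite mxE.
case: ifP => j0.
  rewrite (eq_bigr (fun i => v 0 i * (i != j)%:R)); last first.
    by move=> i _; rewrite /T_adj j0 /= orbT andbT.
  by rewrite sumr_mul_indicator [X in _ = X - _](bigD1 j) //= addrC addrK.
case: ifP => j4.
  rewrite (eq_bigr (fun i => v 0 i * ((nat_of_ord i <= 4)%N && (i != j))%:R)); last first.
    move=> i _; rewrite /T_adj j0 j4 /= andbT.
    by case: (eqVneq (nat_of_ord i) 0%N) => [->|ne] //=; rewrite andbC.
  by rewrite sumr_mul_indicator [X in _ = X - _](bigD1 j) //= addrC addrK.
rewrite (eq_bigr (fun i => v 0 i * (nat_of_ord i == 0%N)%:R)); last first.
  move=> i _; rewrite /T_adj j0 j4 /= andbF orbF.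
  case: (eqVneq (nat_of_ord i) 0%N) => [ie|ne] /=; last by rewrite andbF.
  by have -> : i != j by apply/eqP => e; move: j0; rewrite -e ie.
by rewrite sumr_mul_indicator.
Qed.

(* The characteristic polynomial of the quotient matrix [[0,4,k],[1,3,0],[1,0,0]]
   of the equitable partition of T_m into u*, the K_4 and the k = m - 10
   pendant vertices. *)
Definition T_cubic (R : nzRingType) (k : R) : {poly R} :=
  'X^3 - 3%:P * 'X^2 - (4 + k)%:P * 'X + (3 * k)%:P.

Lemma horner_T_cubic (R : comNzRingType) (k x : R) :
  (T_cubic k).[x] = x ^+ 3 - 3 * x ^+ 2 - (4 + k) * x + 3 * k.
Proof. by rewrite /T_cubic !hornerE. Qed.

Section TEigenvalues.
Variables (R : fieldType) (m : nat).
Hypothesis hm : (10 <= m)%N.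

Local Notation A := (adj_matrix R (T_adj m)).
Local Notation k := ((m - 10)%:R : R).

Definition T_class_vector (x y z : R) : 'rV[R]_(m - 5) :=
  \row_j (if nat_of_ord j == 0%N then x else if (nat_of_ord j <= 4)%N then y else z).

Let hub_lt : (0 < m - 5)%N. Proof. lia. Qed.
Let clique_vertex_lt : (1 < m - 5)%N. Proof. lia. Qed.
Let hub : 'I_(m - 5) := Ordinal hub_lt.
Let clique_vertex : 'I_(m - 5) := Ordinal clique_vertex_lt.

Lemma T_class_vectorE x y z :
  [/\ T_class_vector x y z 0 hub = x, T_class_vector x y z 0 clique_vertex = y,
      \sum_(i | (nat_of_ord i <= 4)%N) T_class_vector x y z 0 i = x + 4%:R * y
    & \sum_i T_class_vector x y z 0 i = x + 4%:R * y + k * z].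
Proof.
rewrite !mxE /=.
have [|||-> -> //] := @sum_T_classes R m (T_class_vector x y z 0) x y z hm.
- by move=> i i0; rewrite mxE i0.
- by move=> i /negbTE i0 i4; rewrite mxE i0 i4.
- by move=> i i4; rewrite mxE ifF ?ifF //; apply/negbTE; rewrite -?ltnNge //; lia.
Qed.

Lemma mulmx_T_class_vector x y z :
  T_class_vector x y z *m A = T_class_vector (4%:R * y + k * z) (x + 3%:R * y) x.
Proof.
have [_ _ sumK5 sumT] := T_class_vectorE x y z.
apply/matrixP => i j; rewrite (ord1 i) mulmx_T_adj sumK5 sumT (big_pred1 hub);
  last by move=> l; rewrite /= -val_eqE.
rewrite !mxE /=; case: ifP => j0; rewrite ?j0; first ring.
by case: ifP => j4; rewrite ?j4 //; ring.
Qed.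

Lemma scale_T_class_vector a x y z :
  a *: T_class_vector x y z = T_class_vector (a * x) (a * y) (a * z).
Proof. by apply/matrixP => i j; rewrite !mxE; case: ifP => _ //; case: ifP. Qed.

Lemma T_class_vector0 : T_class_vector 0 0 0 = 0.
Proof. by apply/matrixP => i j; rewrite !mxE; case: ifP => _ //; case: ifP. Qed.

Lemma T_eigenvector_class_vector a (v : 'rV[R]_(m - 5)) :
  v *m A = a *: v -> a != 0 -> a + 1 != 0 ->
  v = T_class_vector (v 0 hub)
        ((\sum_(i | (nat_of_ord i <= 4)%N) v 0 i) / (a + 1)) (v 0 hub / a).
Proof.
move=> hv a0 a1; apply/matrixP => i j; rewrite (ord1 i) mxE.
move/matrixP/(_ 0 j): hv; rewrite mulmx_T_adj mxE.
case: ifP => [j0|_]; first by rewrite (_ : j = hub) //; apply: val_inj; apply/eqP.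
case: ifP => _ ej; last first.
  by rewrite (big_pred1 hub) in ej; [rewrite ej mulrC mulKf | move=> l; rewrite /= -val_eqE].
by apply: (mulIf a1); rewrite divfK // -[X in _ = X](subrK (v 0 j)) ej; ring.
Qed.

Lemma T_eigenvalue_cases a :
  eigenvalue A a -> [\/ a = 0, a = -1 | root (T_cubic k) a].
Proof.
move=> /eigenvalueP [v hv vn0].
have [->|a0] := eqVneq a 0; first by constructor 1.
have [->|aN1] := eqVneq a (-1); first by constructor 2.
constructor 3; have a1 : a + 1 != 0 by rewrite addr_eq0.
have vE := T_eigenvector_class_vector hv a0 a1.
move: hv vn0; rewrite vE.
set x := v 0 hub; set y := _ / (a + 1); set z := x / a.
rewrite mulmx_T_class_vector scale_T_class_vector => hv vn0.
have [hx hy _ _] := T_class_vectorE (4%:R * y + k * z) (x + 3%:R * y) x.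
rewrite hv in hx hy; have [hx' hy' _ _] := T_class_vectorE (a * x) (a * y) (a * z).
rewrite hx' in hx; rewrite hy' in hy.
have hz : a * z = x by rewrite /z mulrC divfK.
have hy3 : (a - 3) * y = x by rewrite mulrBl hy addrK.
have cubic_x : x * (T_cubic k).[a] = 0.
  rewrite horner_T_cubic.
  have -> : x * (a ^+ 3 - 3 * a ^+ 2 - (4 + k) * a + 3 * k) =
      a * (a - 3) * (a * x - (4%:R * y + k * z)) + 4 * a * ((a - 3) * y - x)
      + k * (a - 3) * (a * z - x) by ring.
  by rewrite hx hz hy3 !subrr !mulr0 !addr0.
have [x0|xn0] := eqVneq x 0; last first.
  by move/eqP: cubic_x; rewrite mulf_eq0 (negbTE xn0).
have z0 : z = 0 by rewrite /z x0 mul0r.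
have y4 : 4 * y = 0 by move: hx; rewrite x0 z0 !mulr0 addr0.
have y0 : y = 0.
  have : (a + 1) * y = 0.
    have -> : a + 1 = (a - 3) + 4 by ring.
    by rewrite mulrDl hy3 y4 x0 addr0.
  by move/eqP; rewrite mulf_eq0 (negbTE a1) => /eqP.
by move: vn0; rewrite x0 y0 z0 T_class_vector0 eqxx.
Qed.

Lemma T_cubic_root_eigenvalue r :
  r != 0 -> r != 3 -> root (T_cubic k) r -> eigenvalue A r.
Proof.
move=> r0 r3 /eqP; rewrite horner_T_cubic => hr.
have r3' : r - 3 != 0 by rewrite subr_eq0.
apply/eigenvalueP; exists (T_class_vector 1 (r - 3)^-1 r^-1); last first.
  by apply: contra_neq (@oner_neq0 R) => /matrixP/(_ 0 hub); rewrite !mxE.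
rewrite mulmx_T_class_vector scale_T_class_vector mulr1 divff //; congr T_class_vector.
- have -> : 4 * (r - 3)^-1 + k * r^-1 =
      r - (r ^+ 3 - 3 * r ^+ 2 - (4 + k) * r + 3 * k) / (r * (r - 3)).
    by field; rewrite r0 r3'.
  by rewrite hr mul0r subr0.
- by field; rewrite r3'.
Qed.

End TEigenvalues.

Lemma T_eigenvalue_norm_le (R : realType) m (a c : R) : (10 <= m)%N -> 1 <= c ->
  (forall x, c < `|x| -> ~~ root (T_cubic (m - 10)%:R) x) ->
  eigenvalue (adj_matrix R (T_adj m)) a -> `|a| <= c.
Proof.
move=> hm c1 hc /(T_eigenvalue_cases hm) [->|->|ra]; rewrite ?normr0 ?normrN1; [lra|lra|].
by rewrite leNgt; apply: contraL ra; apply: hc.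
Qed.

Lemma horner_p_poly (R : realType) m (x : R) :
  (p_poly R m).[x] = x ^+ 4 - m%:R * x ^+ 2 - (m%:R - 2) * x + (m%:R / 2 - 1).
Proof. by rewrite /p_poly !hornerE. Qed.

(* The hypotheses say p_m(c) > 0, p_m'(c) >= 0 and p_m''(c) >= 0, so that the Taylor
   expansion of p_m at c has nonnegative coefficients. *)
Lemma p_poly_gt0_right (R : realType) m (c x : R) :
  0 < (p_poly R m).[c] ->
  0 <= 4 * c ^+ 3 - 2 * m%:R * c - (m%:R - 2) -> 0 <= 6 * c ^+ 2 - m%:R -> 0 <= c ->
  c <= x -> 0 < (p_poly R m).[x].
Proof.
rewrite !horner_p_poly => h0 h1 h2 hc hx.
set M : R := m%:R in h0 h1 h2 *.
have [t ht ->] : exists2 t, 0 <= t & x = t + c.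
  by exists (x - c); [rewrite subr_ge0 | ring].
have -> : (t + c) ^+ 4 - M * (t + c) ^+ 2 - (M - 2) * (t + c) + (M / 2 - 1) =
   t ^+ 4 + 4 * c * t ^+ 3 + (6 * c ^+ 2 - M) * t ^+ 2
   + (4 * c ^+ 3 - 2 * M * c - (M - 2)) * t
   + (c ^+ 4 - M * c ^+ 2 - (M - 2) * c + (M / 2 - 1)) by ring.
have t3 : 0 <= 4 * c * t ^+ 3 by rewrite !mulr_ge0 ?exprn_ge0.
have t2 : 0 <= (6 * c ^+ 2 - M) * t ^+ 2 by rewrite mulr_ge0 ?exprn_ge0.
have t1 : 0 <= (4 * c ^+ 3 - 2 * M * c - (M - 2)) * t by rewrite mulr_ge0.
have t4 : 0 <= t ^+ 4 by rewrite exprn_ge0.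
lra.
Qed.

Lemma rho'_le (R : realType) m (c : R) : (10 <= m)%N -> 1 <= c ->
  (forall x, c <= x -> 0 < (p_poly R m).[x]) -> rho' R m <= c.
Proof.
move=> hm c1 hp; apply: sup_roots_le => [|x cx]; last first.
  by rewrite /root gt_eqF // hp // ltW.
have [z _ rz] : exists2 z, 1 <= z <= c & root (p_poly R m) z.
  apply: poly_ivt => //; apply/andP; split; last exact/ltW/hp.
  have : 10 <= m%:R :> R by rewrite (ler_nat R 10 m).
  by rewrite horner_p_poly; lra.
by exists z.
Qed.

Lemma T_cubic_root_above (R : realType) (k c : R) : 0 <= k <= 6 -> 3 < c ->
  (T_cubic k).[c] < 0 -> exists2 r, c < r & root (T_cubic k) r.
Proof.
rewrite horner_T_cubic => /andP[k0 k6] c3 hc.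
have c10 : c <= 10 by rewrite leNgt; apply/negP => lt; nra.
have [r /andP[r1 _] rr] : exists2 r, c <= r <= 10 & root (T_cubic k) r.
  apply: poly_ivt => //; rewrite !horner_T_cubic ltW //=; nra.
exists r => //; rewrite lt_def r1 andbT; apply/eqP => rc.
by move: rr; rewrite /root rc horner_T_cubic lt_eqF.
Qed.

Lemma T_cubic_no_root_above_10 (R : realType) (k : R) : 0 <= k <= 6 ->
  forall x, 10 < `|x| -> ~~ root (T_cubic k) x.
Proof.
move=> /andP[k0 k6] x hx; rewrite /root horner_T_cubic.
have [x0|x0] := lerP 0 x.
  by rewrite ger0_norm // in hx; rewrite gt_eqF //; nra.
by rewrite ltr0_norm // in hx; rewrite lt_eqF //; nra.
Qed.

Lemma rho'_lt_spectral_radius_T (R : realType) m (c : R) :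
  (10 <= m)%N -> (m <= 16)%N -> 3 < c -> (T_cubic (m - 10)%:R).[c] < 0 ->
  (forall x, c <= x -> 0 < (p_poly R m).[x]) ->
  rho' R m < spectral_radius R (T_adj m).
Proof.
move=> hm hm16 c3 hcc hp.
have hk : 0 <= ((m - 10)%:R : R) <= 6.
  by rewrite ler0n /= (ler_nat R (m - 10) 6); lia.
have [r cr rr] := T_cubic_root_above hk c3 hcc.
have rE : eigenvalue (adj_matrix R (T_adj m)) r.
  by apply: T_cubic_root_eigenvalue => //; apply/eqP; lra.
have := eigenvalue_le_spectral_radius rE
  (fun b => T_eigenvalue_norm_le hm (ler1n R 10) (T_cubic_no_root_above_10 hk)).
rewrite gtr0_norm => [r_le|]; last lra.
by apply: le_lt_trans (rho'_le hm _ hp) (lt_le_trans cr r_le); lra.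
Qed.

Lemma rho'_lt_spectral_radius_T_small (R : realType) m :
  ~~ odd m -> (10 <= m)%N -> (m <= 16)%N -> rho' R m < spectral_radius R (T_adj m).
Proof.
move=> m_even m10 m16.
have [c c3 [hcubic hp]] : exists2 c : R, 3 < c &
    (T_cubic (m - 10)%:R).[c] < 0 /\ forall x, c <= x -> 0 < (p_poly R m).[x].
  have : m \in [:: 10; 12; 14; 16]%N by rewrite !inE; move: m_even; lia.
  rewrite !inE => /or4P[] /eqP ->;
    [exists (7/2) | exists 4 | exists (41/10) | exists (869/200)]; try lra;
    split=> [|x]; rewrite ?horner_T_cubic ?natrB //;
    try (apply: p_poly_gt0_right; rewrite ?horner_p_poly); lra.
exact: rho'_lt_spectral_radius_T m10 m16 c3 hcubic hp.
Qed.

Lemma horner_T_cubic_sqr (R : comNzRingType) (k s x : R) : s ^+ 2 = k + 4 ->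
  (T_cubic k).[x] = (x - 3) * (x ^+ 2 - s ^+ 2) - 12.
Proof. by move=> hs; rewrite horner_T_cubic hs; ring. Qed.

Lemma shifted_cubic_gt12 (R : realType) (s x : R) : 173 / 50 <= s ->
  s + 18 / 5 / s <= x -> 12 < (x - 3) * (x ^+ 2 - s ^+ 2).
Proof.
move=> hs cx; set c := s + 18 / 5 / s in cx *.
have s0 : 0 < s by lra.
have sc : s < c by rewrite /c ltrDl divr_gt0 //; lra.
have at_c : 12 < (c - 3) * (c ^+ 2 - s ^+ 2).
  have -> : (c - 3) * (c ^+ 2 - s ^+ 2) =
      (s ^+ 2 - 3 * s + 18 / 5) * (2 * (18 / 5) * s ^+ 2 + (18 / 5) ^+ 2) / s ^+ 3.
    by rewrite /c; field; rewrite gt_eqF.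
  rewrite ltr_pdivlMr ?exprn_gt0 //.
  have [t t0 ->] : exists2 t, 0 <= t & s = t + 173 / 50.
    by exists (s - 173 / 50); [rewrite subr_ge0 | ring].
  nra.
have : (c - 3) * (c ^+ 2 - s ^+ 2) <= (x - 3) * (x ^+ 2 - s ^+ 2).
  by apply: ler_pM; nra.
lra.
Qed.

Lemma T_cubic_no_root_beyond (R : realType) (k s : R) :
  s ^+ 2 = k + 4 -> 173 / 50 <= s ->
  forall x, s + 18 / 5 / s < `|x| -> ~~ root (T_cubic k) x.
Proof.
move=> hk hs x hx; rewrite /root (horner_T_cubic_sqr _ hk).
have sc : s <= s + 18 / 5 / s by rewrite lerDl divr_ge0 //; lra.
have [x0|x0] := lerP 0 x.
  rewrite ger0_norm // in hx.
  by rewrite gt_eqF // subr_gt0 shifted_cubic_gt12 // ltW.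
rewrite ltr0_norm // in hx.
have : (x - 3) * (x ^+ 2 - s ^+ 2) < 0 by rewrite nmulr_rlt0 ?subr_lt0; nra.
by move=> neg; rewrite lt_eqF //; lra.
Qed.

Lemma p_poly_gt0_large (R : realType) m (x : R) :
  (18 <= m)%N -> m%:R <= x -> 0 < (p_poly R m).[x].
Proof.
move=> hm hx; rewrite horner_p_poly.
have hM : 18 <= m%:R :> R by rewrite (ler_nat R 18 m).
set M : R := m%:R in hM hx *.
have h1 : M * x <= x * x by nra.
have h2 : 18 * x <= x ^+ 2 by nra.
have h3 : M * x ^+ 2 + M * x <= x ^+ 4 - x ^+ 2 by nra.
nra.
Qed.

Lemma p_poly_lt0_near_sqrt (R : realType) m (s : R) : (18 <= m)%N ->
  s ^+ 2 = (m - 10)%:R + 4 -> 173 / 50 <= s -> (p_poly R m).[s + 18 / 5 / s] < 0.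
Proof.
move=> hm hk hs; have s0 : 0 < s by lra.
have mE : m%:R = s ^+ 2 + 6 :> R by rewrite hk natrB; [ring | lia].
rewrite horner_p_poly mE -(pmulr_rlt0 _ (exprn_gt0 4 s0)).
have -> : s ^+ 4 * ((s + 18 / 5 / s) ^+ 4 - (s ^+ 2 + 6) * (s + 18 / 5 / s) ^+ 2
      - (s ^+ 2 + 6 - 2) * (s + 18 / 5 / s) + ((s ^+ 2 + 6) / 2 - 1)) =
    (s ^+ 2 + 18 / 5) ^+ 4 - (s ^+ 2 + 6) * s ^+ 2 * (s ^+ 2 + 18 / 5) ^+ 2
    - (s ^+ 2 + 4) * (s ^+ 2 + 18 / 5) * s ^+ 3 + (s ^+ 2 / 2 + 2) * s ^+ 4.
  by field; rewrite gt_eqF.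
have [t t0 ->] : exists2 t, 0 <= t & s = t + 173 / 50.
  by exists (s - 173 / 50); [rewrite subr_ge0 | ring].
have t2 : 0 <= t ^+ 2 by rewrite sqr_ge0.
have t3 : 0 <= t ^+ 3 by rewrite exprn_ge0.
have t4 : 0 <= t ^+ 4 by rewrite exprn_ge0.
have t5 : 0 <= t ^+ 5 by rewrite exprn_ge0.
have t6 : 0 <= t ^+ 6 by rewrite exprn_ge0.
have t7 : 0 <= t ^+ 7 by rewrite exprn_ge0.
lra.
Qed.

Lemma spectral_radius_T_lt_rho' (R : realType) m :
  (18 <= m)%N -> spectral_radius R (T_adj m) < rho' R m.
Proof.
move=> hm; have hm10 : (10 <= m)%N by lia.
have k8 : 8 <= (m - 10)%:R :> R by rewrite (ler_nat R 8); lia.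
pose s := Num.sqrt ((m - 10)%:R + 4 : R).
have hk : s ^+ 2 = (m - 10)%:R + 4 by rewrite sqr_sqrtr //; lra.
have s0 : 0 <= s := sqrtr_ge0 _.
have hs : 173 / 50 <= s by rewrite leNgt; apply/negP => lt; nra.
pose c := s + 18 / 5 / s.
have sc : s < c by rewrite /c ltrDl divr_gt0 //; lra.
have sr_le_c : spectral_radius R (T_adj m) <= c.
  apply: spectral_radius_le => [|a]; last first.
    have c1 : 1 <= c by lra.
    exact: T_eigenvalue_norm_le hm10 c1 (T_cubic_no_root_beyond hk hs).
  have [r /andP[sr rc] rr] : exists2 r, s <= r <= c & root (T_cubic (m - 10)%:R) r.
    apply: poly_ivt; first exact: ltW.
    rewrite !(horner_T_cubic_sqr _ hk) subrr mulr0 add0r.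
    by have := shifted_cubic_gt12 hs (lexx c); lra.
  by exists r; apply: (T_cubic_root_eigenvalue hm10) rr; apply/eqP; lra.
have pc : (p_poly R m).[c] < 0 by apply: p_poly_lt0_near_sqrt.
have cm : c <= m%:R.
  have d2 : 18 / 5 / s <= 2 by rewrite ler_pdivrMr; lra.
  have kE : (m - 10)%:R = m%:R - 10 :> R by rewrite natrB.
  by rewrite /c; rewrite kE in hk; nra.
have [z /andP[cz _] rz] : exists2 z, c <= z <= m%:R & root (p_poly R m) z.
  by apply: poly_ivt; rewrite // ltW //= ltW // p_poly_gt0_large.
have zc : c < z.
  by rewrite lt_def cz andbT; apply/eqP => zE; move: rz; rewrite /root zE lt_eqF.
apply: (le_lt_trans sr_le_c (lt_le_trans zc _)).
apply: (root_le_sup_roots rz (c := m%:R)) => y my.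
by rewrite /root gt_eqF // p_poly_gt0_large // ltW.
Qed.

Unset Implicit Arguments.
Theorem proposition1p2 (R : realType) (m : nat) :
  ~~ odd m -> (10 <= m)%N ->
  [/\ simple_graph (T_adj m),
      H43_free (T_adj m),
      ((m <= 16)%N -> rho' R m < spectral_radius R (T_adj m))
    & ((18 <= m)%N -> spectral_radius R (T_adj m) < rho' R m)].
Proof.
move=> m_even m10; split.
- exact: T_adj_simple.
- exact: T_adj_H43_free.
- exact: rho'_lt_spectral_radius_T_small.
- exact: spectral_radius_T_lt_rho'.
Qed.
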